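(* Let $q\in\mathbb H$. The function $s\mapsto\mathcal D S_L^{-1}(s,q)$, defined for $s\in\mathbb H\setminus[q]$, is intrinsic slice hyperholomorphic in $s$.
   Context: $\mathbb H$ denotes the quaternions; $\mathbb S$ is the sphere of unit purely imaginary quaternions; for $q=q_0+\underline q$, $[q]=\{q_0+J|\underline q|:J\in\mathbb S\}$. $S_L^{-1}(s,q):=(s-\bar q)(s^2-2\Re(q)s+|q|^2)^{-1}$ and $\mathcal D=\partial_{q_0}+\sum_{i=1}^3e_i\partial_{q_i}$ acts in the variable $q$. A function $h$ on an axially symmetric open set (with $u+Iv$ containing all $u+Jv$, $J\in\mathbb S$) is intrinsic slice hyperholomorphic if $h(u+Jv)=\alpha(u,v)+J\beta(u,v)$ for all $J\in\mathbb S$ with $\alpha,\beta$ real-valued differentiable, $\alpha(u,-v)=\alpha(u,v)$, $\beta(u,-v)=-\beta(u,v)$, $\partial_u\alpha=\partial_v\beta$, $\partial_v\alpha=-\partial_u\beta$. *)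

From HB Require Import structures.
From mathcomp Require Import all_boot all_order all_algebra.
From mathcomp Require Import all_classical all_reals all_analysis.
Set Implicit Arguments. Unset Strict Implicit. Unset Printing Implicit Defensive.
Import Order.TTheory GRing.Theory Num.Theory.
Import numFieldNormedType.Exports.
Local Open Scope classical_set_scope.
Local Open Scope ring_scope.

Record quat (R : realType) := Quat { q0 : R; q1 : R; q2 : R; q3 : R }.
Arguments Quat {R}.

Section Quaternions.
Variable R : realType.
Implicit Types p q x : quat R.

Definition qreal (a : R) : quat R := Quat a 0 0 0.
Definition qe1 : quat R := Quat 0 1 0 0.
Definition qe2 : quat R := Quat 0 0 1 0.
Definition qe3 : quat R := Quat 0 0 0 1.
Definition qadd p q : quat R :=
  Quat (q0 p + q0 q) (q1 p + q1 q) (q2 p + q2 q) (q3 p + q3 q).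
Definition qopp p : quat R := Quat (- q0 p) (- q1 p) (- q2 p) (- q3 p).
Definition qsub p q := qadd p (qopp q).
(* Hamilton product, i^2 = j^2 = k^2 = ijk = -1 *)
Definition qmul p q : quat R :=
  Quat (q0 p * q0 q - q1 p * q1 q - q2 p * q2 q - q3 p * q3 q)
       (q0 p * q1 q + q1 p * q0 q + q2 p * q3 q - q3 p * q2 q)
       (q0 p * q2 q - q1 p * q3 q + q2 p * q0 q + q3 p * q1 q)
       (q0 p * q3 q + q1 p * q2 q - q2 p * q1 q + q3 p * q0 q).
Definition qscale (a : R) p : quat R := Quat (a * q0 p) (a * q1 p) (a * q2 p) (a * q3 p).
Definition qconj p : quat R := Quat (q0 p) (- q1 p) (- q2 p) (- q3 p).
Definition qnorm2 p : R := q0 p ^+ 2 + q1 p ^+ 2 + q2 p ^+ 2 + q3 p ^+ 2.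
Definition qnorm p : R := Num.sqrt (qnorm2 p).
Definition qinv p : quat R := qscale (qnorm2 p)^-1 (qconj p).
Definition qRe p : R := q0 p.
Definition qIm p : quat R := Quat 0 (q1 p) (q2 p) (q3 p).

Definition qsphere : set (quat R) := [set J | q0 J = 0 /\ qnorm2 J = 1].

Definition qclass q : set (quat R) :=
  [set x | exists2 J, qsphere J & x = qadd (qreal (qRe q)) (qscale (qnorm (qIm q)) J)].

Definition SLinv (s q : quat R) : quat R :=
  qmul (qsub s (qconj q))
       (qinv (qadd (qsub (qmul s s) (qscale (2 * qRe q) s)) (qreal (qnorm2 q)))).

Definition qbasis (i : nat) : quat R :=
  match i with 0 => qreal 1 | 1 => qe1 | 2 => qe2 | _ => qe3 end.
Definition qpartial (i : nat) (f : quat R -> quat R) (q : quat R) : quat R :=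
  let g := fun t : R => f (qadd q (qscale t (qbasis i))) in
  Quat (derive1 (fun t => q0 (g t)) 0) (derive1 (fun t => q1 (g t)) 0) (derive1 (fun t => q2 (g t)) 0) (derive1 (fun t => q3 (g t)) 0).

Definition qD (f : quat R -> quat R) (q : quat R) : quat R :=
  qadd (qpartial 0 f q)
  (qadd (qmul qe1 (qpartial 1 f q))
  (qadd (qmul qe2 (qpartial 2 f q)) (qmul qe3 (qpartial 3 f q)))).

Definition qopen (U : set (quat R)) : Prop :=
  forall x, U x -> exists2 e : R, 0 < e & forall y, qnorm2 (qsub y x) < e -> U y.

Definition axially_symmetric (U : set (quat R)) : Prop :=
  forall (u v : R) I J, qsphere I -> qsphere J ->
    U (qadd (qreal u) (qscale v I)) -> U (qadd (qreal u) (qscale v J)).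

Definition intrinsic_slice_hyperholomorphic (U : set (quat R))
    (h : quat R -> quat R) : Prop :=
  qopen U /\ axially_symmetric U /\
  exists alpha beta : R -> R -> R,
    forall (u v : R) (J : quat R), qsphere J ->
      U (qadd (qreal u) (qscale v J)) ->
      [/\ h (qadd (qreal u) (qscale v J)) = qadd (qreal (alpha u v)) (qscale (beta u v) J),
          differentiable (fun z : R * R => alpha z.1 z.2) (u, v),
          differentiable (fun z : R * R => beta z.1 z.2) (u, v),
          alpha u (- v) = alpha u v /\ beta u (- v) = - beta u v &
          derive1 (fun a => alpha a v) u = derive1 (fun y => beta u y) v /\
          derive1 (fun y => alpha u y) v = - derive1 (fun a => beta a v) u].

End Quaternions.

(* As a function of q, Q_{c,s}(q) = s^2 - 2 Re(q) s + |q|^2 only involves Re q and |q|^2,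
   so its partial derivatives stay in the commutative algebra R[s], and summing
   e_i d_i ((s - conj q) Q_{c,s}(q)^{-1}) gives D S_L^{-1}(s,q) = -4 Q_{c,s}(q)^{-1} +
   2 Q_{c,s}(q)^{-1} = -2 Q_{c,s}(q)^{-1}.  For s = u + vJ, Q_{c,s}(q) = P(u + vJ) with the
   real polynomial P(z) = (z - q0)^2 + |Im q|^2, hence D S_L^{-1}(u + vJ, q) = alpha + J beta
   where alpha + i beta = -2 / P(u + iv) is holomorphic wherever P(u + iv) <> 0, that is off
   the sphere [q] = {q0 + J |Im q|}; alpha is even and beta odd in v because P has real
   coefficients.  The complement of [q] is open because the squared distance from x to [q]
   is at least (x0 - q0)^2 + (|Im x| - |Im q|)^2, by the reverse triangle inequality. *)

From HB Require Import structures.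
From mathcomp Require Import all_boot all_order all_algebra.
From mathcomp Require Import all_classical all_reals all_analysis.
From mathcomp Require Import ring lra.
Set Implicit Arguments. Unset Strict Implicit. Unset Printing Implicit Defensive.
Import Order.TTheory GRing.Theory Num.Theory.
Import numFieldNormedType.Exports.
Local Open Scope classical_set_scope.
Local Open Scope ring_scope.

Section RealCalculus.
Variable R : realType.

Lemma is_derive_div (f g : R -> R) (x df dg : R) :
  is_derive x 1 f df -> is_derive x 1 g dg -> g x != 0 ->
  is_derive x 1 (fun t => f t / g t) ((df * g x - f x * dg) / g x ^+ 2).
Proof.
move=> dfx dgx gx0.
apply: is_derive_eq (is_deriveM dfx (is_deriveV (f := g) gx0 dgx)) _.
by rewrite /GRing.scale /=; field.
Qed.

Lemma differentiable_fst (p : R * R) :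
  differentiable (fun z : R * R => z.1) p.
Proof.
apply: (@linear_differentiable _ _ _ (fst : {linear (R * R)%type -> R})).
by move=> [a b]; exact: cvg_fst.
Qed.

Lemma differentiable_snd (p : R * R) :
  differentiable (fun z : R * R => z.2) p.
Proof.
apply: (@linear_differentiable _ _ _ (snd : {linear (R * R)%type -> R})).
by move=> [a b]; exact: cvg_snd.
Qed.

Lemma differentiable_sqr (V : normedModType R) (f : V -> R) x :
  differentiable f x -> differentiable (fun z => f z ^+ 2) x.
Proof.
move=> df; rewrite (_ : (fun z => f z ^+ 2) = (fun z => f z * f z)).
  exact: differentiableM.
by apply/funext => z; rewrite expr2.
Qed.

End RealCalculus.

Ltac differentiable_poly :=
  repeat first [ apply: differentiable_sqr | apply: differentiableM | apply: differentiableD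
               | apply: differentiableB | apply: differentiableN | apply: differentiable_fst
               | apply: differentiable_snd | apply: differentiable_cst ].

Ltac quat_unfold :=
  rewrite /qinv /qsub /qadd /qopp /qmul /qscale /qconj /qreal /qe1 /qe2 /qe3 /qnorm2
          /qRe /qIm /=.

Ltac is_qderive_by_ring :=
  split; apply: is_derive_eq; rewrite /GRing.scale /=; ring.

Section QuaternionCalculus.
Variable R : realType.
Implicit Types (p q h : quat R) (t : R).

Definition qdot p q : R := q0 p * q0 q + q1 p * q1 q + q2 p * q2 q + q3 p * q3 q.

Definition is_qderive (X : R -> quat R) t (D : quat R) : Prop :=
  [/\ is_derive t 1 (fun s => q0 (X s)) (q0 D), is_derive t 1 (fun s => q1 (X s)) (q1 D),
      is_derive t 1 (fun s => q2 (X s)) (q2 D) & is_derive t 1 (fun s => q3 (X s)) (q3 D)].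

Lemma is_qderive_eq X t D D' : is_qderive X t D -> D = D' -> is_qderive X t D'.
Proof. by move=> ? <-. Qed.

Lemma is_qderive_cst p t : is_qderive (fun=> p) t (qreal 0).
Proof. by split; exact: is_derive_cst. Qed.

Lemma is_qderive_line p q t : is_qderive (fun s => qadd p (qscale s q)) t q.
Proof. quat_unfold; is_qderive_by_ring. Qed.

Lemma is_qderiveB X Y t DX DY : is_qderive X t DX -> is_qderive Y t DY ->
  is_qderive (fun s => qsub (X s) (Y s)) t (qsub DX DY).
Proof. by case=> ? ? ? ? [] ? ? ? ?; quat_unfold; is_qderive_by_ring. Qed.

Lemma is_qderive_conj X t D : is_qderive X t D ->
  is_qderive (fun s => qconj (X s)) t (qconj D).
Proof. by case=> ? ? ? ?; quat_unfold; is_qderive_by_ring. Qed.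

Lemma is_qderiveM X Y t DX DY : is_qderive X t DX -> is_qderive Y t DY ->
  is_qderive (fun s => qmul (X s) (Y s)) t (qadd (qmul DX (Y t)) (qmul (X t) DY)).
Proof. by case=> ? ? ? ? [] ? ? ? ?; quat_unfold; is_qderive_by_ring. Qed.

Lemma is_qderiveZ (f : R -> R) X t df D : is_derive t 1 f df -> is_qderive X t D ->
  is_qderive (fun s => qscale (f s) (X s)) t (qadd (qscale (f t) D) (qscale df (X t))).
Proof. by move=> ? [] ? ? ? ?; quat_unfold; is_qderive_by_ring. Qed.

Lemma is_derive_qnorm2 X t D : is_qderive X t D ->
  is_derive t 1 (fun s => qnorm2 (X s)) (2 * qdot (X t) D).
Proof. by case=> ? ? ? ?; apply: is_derive_eq; rewrite /qdot /GRing.scale /=; ring. Qed.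

Definition qinv_derive p D : quat R :=
  qadd (qscale (qnorm2 p)^-1 (qconj D))
       (qscale (- (qnorm2 p) ^- 2 * (2 * qdot p D)) (qconj p)).

Lemma is_qderiveV X t D : is_qderive X t D -> qnorm2 (X t) != 0 ->
  is_qderive (fun s => qinv (X s)) t (qinv_derive (X t) D).
Proof.
move=> dX X0; rewrite /qinv_derive /qinv.
apply: (is_qderiveZ (f := fun s => (qnorm2 (X s))^-1)) (is_qderive_conj dX).
exact: (is_deriveV (f := fun s => qnorm2 (X s))) X0 (is_derive_qnorm2 dX).
Qed.

Lemma qpartial_is_qderive (f : quat R -> quat R) i q D :
  is_qderive (fun t => f (qadd q (qscale t (qbasis R i)))) 0 D -> qpartial i f q = D.
Proof. by case: D => ? ? ? ? [] /= ? ? ? ?; rewrite /qpartial !derive1E !derive_val. Qed.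

Lemma qadd_scale0 p h : qadd p (qscale 0 h) = p.
Proof. by case: p => *; quat_unfold; rewrite !mul0r !addr0. Qed.

Definition Qcs s q : quat R :=
  qadd (qsub (qmul s s) (qscale (2 * qRe q) s)) (qreal (qnorm2 q)).

Lemma is_qderive_Qcs s q h :
  is_qderive (fun t => Qcs s (qadd q (qscale t h))) 0
    (qsub (qreal (2 * qdot q h)) (qscale (2 * q0 h) s)).
Proof. rewrite /Qcs /qdot; quat_unfold; is_qderive_by_ring. Qed.

Lemma is_qderive_SLinv s q h : qnorm2 (Qcs s q) != 0 ->
  is_qderive (fun t => SLinv s (qadd q (qscale t h))) 0
    (qadd (qmul (qopp (qconj h)) (qinv (Qcs s q)))
          (qmul (qsub s (qconj q))
                (qinv_derive (Qcs s q) (qsub (qreal (2 * qdot q h)) (qscale (2 * q0 h) s))))).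
Proof.
move=> Q0.
have dS := is_qderiveB (is_qderive_cst s 0) (is_qderive_conj (is_qderive_line q h 0)).
have := is_qderiveV (is_qderive_Qcs s q h); rewrite /= qadd_scale0 => /(_ Q0) dQinv.
apply: is_qderive_eq (is_qderiveM dS dQinv) _; rewrite /= qadd_scale0.
congr (qadd (qmul _ _) _).
by case: (qconj h) => *; quat_unfold; rewrite !add0r.
Qed.

Lemma qD_SLinv s q : qnorm2 (Qcs s q) != 0 ->
  qD (SLinv s) q = qscale (-2) (qinv (Qcs s q)).
Proof.
move=> Q0; rewrite /qD !(qpartial_is_qderive (is_qderive_SLinv _ Q0)).
move: Q0; case: s => s0 s1 s2 s3; case: q => a0 a1 a2 a3.
cbv beta iota delta [qinv_derive qinv Qcs qnorm2 qdot qbasis qadd qsub qmul qscale qconj qopp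
  qreal qRe qe1 qe2 qe3 q0 q1 q2 q3]; rewrite !addr0 => Q0.
by congr Quat; field.
Qed.

End QuaternionCalculus.

Section QuaternionNorm.
Variable R : realType.
Implicit Types (p q : quat R) (a : R).

Lemma qnorm2_ge0 p : 0 <= qnorm2 p.
Proof. by rewrite /qnorm2 !addr_ge0 ?sqr_ge0. Qed.

Lemma qnorm_sqr p : qnorm p ^+ 2 = qnorm2 p.
Proof. exact/sqr_sqrtr/qnorm2_ge0. Qed.

Lemma qnorm2_scale a p : qnorm2 (qscale a p) = a ^+ 2 * qnorm2 p.
Proof. by rewrite /qnorm2 /=; ring. Qed.

Lemma qnorm2_eq0 p : qnorm2 p = 0 -> p = Quat 0 0 0 0.
Proof.
case: p => x0 x1 x2 x3; rewrite /qnorm2 /= => /eqP.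
rewrite !paddr_eq0 ?addr_ge0 ?sqr_ge0 // !sqrf_eq0.
by case/andP=> /andP[/andP[/eqP-> /eqP->] /eqP->] /eqP->.
Qed.

Lemma qdot_le_qnorm p q : qdot p q <= qnorm p * qnorm q.
Proof.
have lagrange : qnorm2 p * qnorm2 q - qdot p q ^+ 2 =
    (q0 p * q1 q - q1 p * q0 q) ^+ 2 + (q0 p * q2 q - q2 p * q0 q) ^+ 2
  + (q0 p * q3 q - q3 p * q0 q) ^+ 2 + (q1 p * q2 q - q2 p * q1 q) ^+ 2
  + (q1 p * q3 q - q3 p * q1 q) ^+ 2 + (q2 p * q3 q - q3 p * q2 q) ^+ 2.
  by rewrite /qnorm2 /qdot; ring.
have : qdot p q ^+ 2 <= (qnorm p * qnorm q) ^+ 2.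
  by rewrite exprMn !qnorm_sqr -subr_ge0 lagrange !addr_ge0 ?sqr_ge0.
have : 0 <= qnorm p * qnorm q by rewrite mulr_ge0 ?sqrtr_ge0.
nra.
Qed.

Lemma qnorm_sub_sqr_le p q : (qnorm p - qnorm q) ^+ 2 <= qnorm2 (qsub p q).
Proof.
have -> : qnorm2 (qsub p q) = qnorm2 p + qnorm2 q - 2 * qdot p q.
  by rewrite /qnorm2 /qdot /=; ring.
have -> : (qnorm p - qnorm q) ^+ 2 = qnorm2 p + qnorm2 q - 2 * (qnorm p * qnorm q).
  by rewrite -!qnorm_sqr; ring.
by have := qdot_le_qnorm p q; lra.
Qed.

End QuaternionNorm.

Section SliceDecomposition.
Variable R : realType.
Implicit Types (q J : quat R) (a b u v : R).

Lemma qsphereP J : qsphere J <-> q0 J = 0 /\ q1 J ^+ 2 + q2 J ^+ 2 + q3 J ^+ 2 = 1.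
Proof.
rewrite /qsphere /qnorm2.
by split=> -[J0 J1]; split=> //; move: J1; rewrite J0 expr0n add0r.
Qed.

Lemma qnorm2_slice a b J : qsphere J -> qnorm2 (qadd (qreal a) (qscale b J)) = a ^+ 2 + b ^+ 2.
Proof.
case: J => j0 j1 j2 j3 /qsphereP /= [-> J1].
have -> : b ^+ 2 = b ^+ 2 * (j1 ^+ 2 + j2 ^+ 2 + j3 ^+ 2) by rewrite J1 mulr1.
by rewrite /qnorm2 /qadd /qscale /qreal /=; ring.
Qed.

Lemma qinv_slice a b J : qsphere J ->
  qinv (qadd (qreal a) (qscale b J)) =
  qadd (qreal (a / (a ^+ 2 + b ^+ 2))) (qscale (- b / (a ^+ 2 + b ^+ 2)) J).
Proof.
move=> SJ; rewrite /qinv qnorm2_slice //.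
case: J SJ => j0 j1 j2 j3 /qsphereP /= [-> _].
by rewrite /qscale /qconj /qadd /qreal /=; congr Quat; ring.
Qed.

Lemma qRe_slice u v J : qsphere J -> q0 (qadd (qreal u) (qscale v J)) = u.
Proof. by case=> J0 _; rewrite /= J0 mulr0 addr0. Qed.

Lemma qIm_slice u v J : qsphere J -> qIm (qadd (qreal u) (qscale v J)) = qscale v J.
Proof. by case: J => j0 j1 j2 j3 [/= J0 _]; rewrite /qIm /qscale /= J0 mulr0 !add0r. Qed.

Definition Qcs_re q u v : R := (u - q0 q) ^+ 2 - v ^+ 2 + qnorm2 (qIm q).
Definition Qcs_im q u v : R := 2 * (u - q0 q) * v.
Definition Qcs_norm2 q u v : R := Qcs_re q u v ^+ 2 + Qcs_im q u v ^+ 2.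

Lemma Qcs_slice q u v J : qsphere J ->
  Qcs (qadd (qreal u) (qscale v J)) q = qadd (qreal (Qcs_re q u v)) (qscale (Qcs_im q u v) J).
Proof.
case: J => j0 j1 j2 j3 /qsphereP /= [-> J1]; case: q => a0 a1 a2 a3.
rewrite /Qcs /Qcs_re /Qcs_im /qRe.
have -> : v ^+ 2 = v ^+ 2 * (j1 ^+ 2 + j2 ^+ 2 + j3 ^+ 2) by rewrite J1 mulr1.
by quat_unfold; congr Quat; ring.
Qed.

Definition qD_SLinv_re q u v : R := -2 * Qcs_re q u v / Qcs_norm2 q u v.
Definition qD_SLinv_im q u v : R := 2 * Qcs_im q u v / Qcs_norm2 q u v.

Lemma qD_SLinv_slice q u v J : qsphere J -> Qcs_norm2 q u v != 0 ->
  qD (SLinv (qadd (qreal u) (qscale v J))) q =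
  qadd (qreal (qD_SLinv_re q u v)) (qscale (qD_SLinv_im q u v) J).
Proof.
move=> SJ N0.
rewrite qD_SLinv Qcs_slice ?qnorm2_slice // qinv_slice //.
rewrite /qD_SLinv_re /qD_SLinv_im -/(Qcs_norm2 q u v).
case: J SJ => j0 j1 j2 j3 /qsphereP /= [-> _].
by rewrite /qscale /qadd /qreal /=; congr Quat; ring.
Qed.

End SliceDecomposition.

Section SphericalClass.
Variable R : realType.
Implicit Types (q x y J : quat R) (u v : R).

Lemma qclassP q x : qclass q x <-> q0 x = q0 q /\ qnorm2 (qIm x) = qnorm2 (qIm q).
Proof.
split.
  case=> J SJ ->; rewrite qRe_slice // qIm_slice // qnorm2_scale qnorm_sqr.
  by case: SJ => _ ->; rewrite mulr1.
case: x => x0 x1 x2 x3 /= [-> xn].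
have [c0|c0] := eqVneq (qnorm (qIm q)) 0.
  move: xn; rewrite -[qnorm2 (qIm q)]qnorm_sqr c0 expr0n => /qnorm2_eq0 [-> -> ->].
  exists (qe1 R); first by split=> //; rewrite /qnorm2 /=; ring.
  by rewrite c0; quat_unfold; congr Quat; ring.
exists (qscale (qnorm (qIm q))^-1 (Quat 0 x1 x2 x3)).
  split; first by rewrite /= mulr0.
  by rewrite qnorm2_scale xn -qnorm_sqr exprVn mulVf // expf_neq0.
by rewrite /qadd /qscale /qreal /qRe /=; congr Quat; field.
Qed.

Lemma qclass_slice q u v J : qsphere J ->
  qclass q (qadd (qreal u) (qscale v J)) <-> u = q0 q /\ v ^+ 2 = qnorm2 (qIm q).
Proof.
move=> SJ; rewrite qclassP qRe_slice // qIm_slice // qnorm2_scale.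
by case: SJ => _ ->; rewrite mulr1.
Qed.

Lemma Qcs_norm2_eq0 q u v : Qcs_norm2 q u v = 0 -> u = q0 q /\ v ^+ 2 = qnorm2 (qIm q).
Proof.
rewrite /Qcs_norm2 /Qcs_re /Qcs_im => /eqP.
rewrite paddr_eq0 ?sqr_ge0 // !sqrf_eq0 => /andP[/eqP re0 /eqP im0].
have r0 := qnorm2_ge0 (qIm q).
have [v0|v0] := eqVneq v 0.
  move: re0; rewrite v0 expr0n subr0 => /eqP.
  by rewrite paddr_eq0 ?sqr_ge0 // sqrf_eq0 subr_eq0 => /andP[/eqP -> /eqP ->].
move/eqP: im0; rewrite !mulf_eq0 (negbTE v0) orbF pnatr_eq0 /= subr_eq0 => /eqP u0.
by split=> //; move: re0; rewrite u0 subrr expr0n /=; lra.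
Qed.

Lemma Qcs_norm2_neq0 q u v J : qsphere J ->
  ~ qclass q (qadd (qreal u) (qscale v J)) -> Qcs_norm2 q u v != 0.
Proof. by move=> SJ notC; apply/eqP => /Qcs_norm2_eq0 uv; apply/notC/qclass_slice. Qed.

Lemma axially_symmetric_compl_qclass q : axially_symmetric (~` qclass q).
Proof. by move=> u v I J SI SJ notCI /(qclass_slice _ _ _ SJ) /(qclass_slice _ _ _ SI). Qed.

Lemma qopen_compl_qclass q : qopen (~` qclass q).
Proof.
move=> x notCx.
set d := (q0 x - q0 q) ^+ 2 + (qnorm (qIm x) - qnorm (qIm q)) ^+ 2.
exists d.
  rewrite lt_def addr_ge0 ?sqr_ge0 // andbT; apply/eqP => /eqP.
  rewrite paddr_eq0 ?sqr_ge0 // !sqrf_eq0 !subr_eq0 => /andP[/eqP x0 /eqP xn].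
  by apply/notCx/qclassP; rewrite -!qnorm_sqr xn.
move=> y yx /qclassP[y0 yn].
have dy : d = (q0 y - q0 x) ^+ 2 + (qnorm (qIm y) - qnorm (qIm x)) ^+ 2.
  by rewrite /d y0 /qnorm yn; ring.
have yxE : qnorm2 (qsub y x) = (q0 y - q0 x) ^+ 2 + qnorm2 (qsub (qIm y) (qIm x)).
  by rewrite /qnorm2 /=; ring.
by have := qnorm_sub_sqr_le (qIm y) (qIm x); lra.
Qed.

End SphericalClass.

Section HolomorphicComponents.
Variable R : realType.
Implicit Types (q : quat R) (u v : R).

Lemma differentiable_qD_SLinv_re q u v : Qcs_norm2 q u v != 0 ->
  differentiable (fun z : R * R => qD_SLinv_re q z.1 z.2) (u, v).
Proof.
move=> N0; apply: differentiableM; last apply: differentiableV => //.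
all: by rewrite /Qcs_norm2 /Qcs_re /Qcs_im; differentiable_poly.
Qed.

Lemma differentiable_qD_SLinv_im q u v : Qcs_norm2 q u v != 0 ->
  differentiable (fun z : R * R => qD_SLinv_im q z.1 z.2) (u, v).
Proof.
move=> N0; apply: differentiableM; last apply: differentiableV => //.
all: by rewrite /Qcs_norm2 /Qcs_re /Qcs_im; differentiable_poly.
Qed.

Lemma qD_SLinv_reN q u v : qD_SLinv_re q u (- v) = qD_SLinv_re q u v.
Proof. by rewrite /qD_SLinv_re /Qcs_norm2 /Qcs_re /Qcs_im sqrrN mulrN sqrrN. Qed.

Lemma qD_SLinv_imN q u v : qD_SLinv_im q u (- v) = - qD_SLinv_im q u v.
Proof. by rewrite /qD_SLinv_im /Qcs_norm2 /Qcs_re /Qcs_im sqrrN mulrN sqrrN; ring. Qed.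

Lemma qD_SLinv_cauchy_riemann q u v : Qcs_norm2 q u v != 0 ->
  derive1 (fun a => qD_SLinv_re q a v) u = derive1 (fun b => qD_SLinv_im q u b) v /\
  derive1 (fun b => qD_SLinv_re q u b) v = - derive1 (fun a => qD_SLinv_im q a v) u.
Proof.
move=> N0.
have dre_u : is_derive u 1 (fun a => -2 * Qcs_re q a v) (-2 * (2 * (u - q0 q))).
  by rewrite /Qcs_re; apply: is_derive_eq; rewrite /GRing.scale /=; ring.
have dre_v : is_derive v 1 (fun b => -2 * Qcs_re q u b) (-2 * (- 2 * v)).
  by rewrite /Qcs_re; apply: is_derive_eq; rewrite /GRing.scale /=; ring.
have dim_u : is_derive u 1 (fun a => 2 * Qcs_im q a v) (2 * (2 * v)).
  by rewrite /Qcs_im; apply: is_derive_eq; rewrite /GRing.scale /=; ring.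
have dim_v : is_derive v 1 (fun b => 2 * Qcs_im q u b) (2 * (2 * (u - q0 q))).
  by rewrite /Qcs_im; apply: is_derive_eq; rewrite /GRing.scale /=; ring.
have dN_u : is_derive u 1 (fun a => Qcs_norm2 q a v)
    (2 * Qcs_re q u v * (2 * (u - q0 q)) + 2 * Qcs_im q u v * (2 * v)).
  by rewrite /Qcs_norm2 /Qcs_re /Qcs_im; apply: is_derive_eq; rewrite /GRing.scale /=; ring.
have dN_v : is_derive v 1 (fun b => Qcs_norm2 q u b)
    (2 * Qcs_re q u v * (- 2 * v) + 2 * Qcs_im q u v * (2 * (u - q0 q))).
  by rewrite /Qcs_norm2 /Qcs_re /Qcs_im; apply: is_derive_eq; rewrite /GRing.scale /=; ring.
rewrite !derive1E /qD_SLinv_re /qD_SLinv_im.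
rewrite (derive_val (is_derive := is_derive_div dre_u dN_u N0)).
rewrite (derive_val (is_derive := is_derive_div dre_v dN_v N0)).
rewrite (derive_val (is_derive := is_derive_div dim_u dN_u N0)).
rewrite (derive_val (is_derive := is_derive_div dim_v dN_v N0)).
by move: N0; rewrite /Qcs_norm2 /Qcs_re /Qcs_im => N0; split; field.
Qed.

End HolomorphicComponents.

Theorem proposition4p10 (R : realType) (q : quat R) :
  intrinsic_slice_hyperholomorphic (~` qclass q) (fun s => qD (SLinv s) q).
Proof.
split; first exact: qopen_compl_qclass.
split; first exact: axially_symmetric_compl_qclass.
exists (qD_SLinv_re q), (qD_SLinv_im q) => u v J SJ notC.
have N0 := Qcs_norm2_neq0 SJ notC.
split.
- exact: qD_SLinv_slice.
- exact: differentiable_qD_SLinv_re.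
- exact: differentiable_qD_SLinv_im.
- by rewrite qD_SLinv_reN qD_SLinv_imN.
- exact: qD_SLinv_cauchy_riemann.
Qed.
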